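(* Let $X$ be a random variable taking values in a set $\mathcal{X}$, $Y \in [0,1]$ a target outcome, and $H$ a random variable (expert feedback) taking values in an arbitrary domain $\mathcal{H}$, all jointly distributed. Let $\mathcal{F}$ be a class of functions $\mathcal{X} \to [0,1]$, $\alpha \ge 0$, and let $S \subseteq \mathcal{X}$ be $\alpha$-indistinguishable with respect to $\mathcal{F}$ and $Y$. Let $g : \mathcal{H} \to [0,1]$ satisfy, for some $\eta \ge 0$ and all $\beta, \gamma \in \mathbb{R}$, $$\mathbb{E}_S[(Y - g(H))^2] \le \mathbb{E}_S[(Y - \gamma - \beta g(H))^2] + \eta.$$ Then for every $f \in \mathcal{F}$, $$\mathbb{E}_S[(Y - g(H))^2] + 4\,\mathrm{Cov}_S(Y, g(H))^2 \le \mathbb{E}_S[(Y - f(X))^2] + 2\alpha + \eta.$$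
   Context: For $S \subseteq \mathcal{X}$ with $\mathbb{P}(X \in S) > 0$, $\mathbb{E}_S$ and $\mathrm{Cov}_S$ denote expectation and covariance conditional on $\{X \in S\}$. A set $S \subseteq \mathcal{X}$ is $\alpha$-indistinguishable with respect to $\mathcal{F}$ and $Y$ if $|\mathrm{Cov}(f(X), Y \mid X \in S)| \le \alpha$ for all $f \in \mathcal{F}$. *)

From HB Require Import structures.
From mathcomp Require Import all_boot all_order all_algebra.
From mathcomp Require Import all_classical all_reals all_analysis.
Set Implicit Arguments. Unset Strict Implicit. Unset Printing Implicit Defensive.
Import Order.TTheory GRing.Theory Num.Theory.
Local Open Scope classical_set_scope.
Local Open Scope ring_scope.

Definition condE {d} {T : measurableType d} {R : realType}
  (P : probability T R) (A : set T) (Z : T -> R) : R :=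
  Rintegral P A Z / fine (P A).

Definition condCov {d} {T : measurableType d} {R : realType}
  (P : probability T R) (A : set T) (U V : T -> R) : R :=
  condE P A (fun w => U w * V w) - condE P A U * condE P A V.

Definition indistinguishable {d} {T : measurableType d} {R : realType}
  {Xs : Type} (P : probability T R) (X : T -> Xs) (Y : T -> R)
  (F : set (Xs -> R)) (S : set Xs) (alpha : R) : Prop :=
  forall f, F f -> `| condCov P (X @^-1` S) (fun w => f (X w)) Y | <= alpha.

From HB Require Import structures.
From mathcomp Require Import all_boot all_order all_algebra.
From mathcomp Require Import all_classical all_reals all_analysis.
From mathcomp Require Import ring lra measurable_realfun.
Set Implicit Arguments.
Unset Strict Implicit.
Unset Printing Implicit Defensive.

Import Order.TTheory GRing.Theory Num.Theory.
Local Open Scope classical_set_scope.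
Local Open Scope ring_scope.

(* Write C for Cov_S(Y, g(H)).  Every affine predictor gamma + beta g(H) with
   the right mean has squared error Var(Y) - 2 beta C + beta^2 Var(g(H)), and
   Var(g(H)) <= 1/4 because g takes values in [0,1]; the choice beta = 4 C
   turns the near-optimality of g into E_S[(Y - g(H))^2] + 4 C^2 <= Var(Y) + eta.
   On the other side, E_S[(Y - f(X))^2] >= Var(Y) - 2 Cov_S(f(X), Y) >= Var(Y)
   - 2 alpha by indistinguishability. *)

Definition bounded_rv {d} {T : measurableType d} {R : realType} (U : T -> R) :=
  measurable_fun setT U /\ exists M : R, forall w, `|U w| <= M.

Definition condVar {d} {T : measurableType d} {R : realType}
  (P : probability T R) (A : set T) (U : T -> R) : R := condCov P A U U.

Section bounded_rv.
Context {d} {T : measurableType d} {R : realType}.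
Implicit Types (U V : T -> R) (k : R).

Lemma bounded_rvD U V :
  bounded_rv U -> bounded_rv V -> bounded_rv (fun w => U w + V w).
Proof.
move=> [mU [M hM]] [mV [N hN]]; split; first exact: measurable_funD.
by exists (M + N) => w; apply: le_trans (ler_normD _ _) _; exact: lerD.
Qed.

Lemma bounded_rvM U V :
  bounded_rv U -> bounded_rv V -> bounded_rv (fun w => U w * V w).
Proof.
move=> [mU [M hM]] [mV [N hN]]; split; first exact: measurable_funM.
by exists (M * N) => w; rewrite normrM; exact: ler_pM.
Qed.

Lemma bounded_rv_cst k : bounded_rv (fun _ : T => k).
Proof. by split; [exact: measurable_cst | exists `|k|]. Qed.

Lemma bounded_rv01 U :
  measurable_fun setT U -> (forall w, 0 <= U w <= 1) -> bounded_rv U.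
Proof.
move=> mU U01; split => //; exists 1 => w.
by have /andP[U0 U1] := U01 w; rewrite ger0_norm.
Qed.

Lemma bounded_rv_integrable (P : probability T R) (A : set T) U :
  measurable A -> bounded_rv U -> P.-integrable A (EFin \o U).
Proof.
move=> mA [mU [M hM]]; apply: measurable_bounded_integrable => //.
- exact: le_lt_trans (probability_le1 P mA) (ltry _).
- exact: measurable_funS mU.
- rewrite /bounded_near; near=> M' => w _ /=.
  apply: le_trans (hM w) _.
  by near: M'; apply: nbhs_pinfty_ge; exact: num_real.
Unshelve. all: end_near.
Qed.

End bounded_rv.

Local Ltac bounded_rv :=
  repeat first [ apply: bounded_rvD | apply: bounded_rvM
               | apply: bounded_rv_cst | assumption ].

Section conditional_moments.
Context {d} {T : measurableType d} {R : realType} (P : probability T R)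
  (A : set T).
Hypotheses (mA : measurable A) (PA_gt0 : (0 < P A)%E).
Implicit Types (U V : T -> R) (k : R).

Local Notation E := (condE P A).
Local Notation Cov := (condCov P A).
Local Notation Var := (condVar P A).

Lemma fine_PA_gt0 : 0 < fine (P A).
Proof.
by apply: fine_gt0; rewrite PA_gt0 /= (le_lt_trans (probability_le1 P mA) (ltry _)).
Qed.

Lemma condED U V : bounded_rv U -> bounded_rv V ->
  E (fun w => U w + V w) = E U + E V.
Proof.
by move=> bU bV; rewrite /condE RintegralD ?mulrDl //; exact: bounded_rv_integrable.
Qed.

Lemma condEZ k U : bounded_rv U -> E (fun w => k * U w) = k * E U.
Proof.
by move=> bU; rewrite /condE RintegralZl ?mulrA //; exact: bounded_rv_integrable.
Qed.

Lemma condE_cst k : E (fun _ => k) = k.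
Proof. by rewrite /condE Rintegral_cst // mulfK // gt_eqF // fine_PA_gt0. Qed.

Lemma condE_ge0 U : (forall w, 0 <= U w) -> 0 <= E U.
Proof.
move=> U0; rewrite /condE divr_ge0 ?Rintegral_ge0 //.
exact: ltW fine_PA_gt0.
Qed.

Lemma ler_condE U V : bounded_rv U -> bounded_rv V ->
  (forall w, U w <= V w) -> E U <= E V.
Proof.
move=> bU bV UV; rewrite /condE ler_wpM2r ?invr_ge0 ?(ltW fine_PA_gt0) //.
by apply: le_Rintegral => //; exact: bounded_rv_integrable.
Qed.

Lemma condCovC U V : Cov U V = Cov V U.
Proof.
by rewrite /condCov mulrC; congr (E _ - _); apply: boolp.funext => w; rewrite mulrC.
Qed.

Lemma condE_sqr_affine_residual U V gamma beta : bounded_rv U -> bounded_rv V ->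
  E (fun w => (U w - gamma - beta * V w) ^+ 2)
  = Var U - 2 * beta * Cov U V + beta ^+ 2 * Var V
    + (E U - gamma - beta * E V) ^+ 2.
Proof.
move=> bU bV.
rewrite (_ : (fun w => _) = fun w => U w * U w + ((-2 * gamma) * U w
    + (gamma ^+ 2 + ((-2 * beta) * (U w * V w)
    + ((2 * gamma * beta) * V w + beta ^+ 2 * (V w * V w)))))); last first.
  by apply: boolp.funext => w; ring.
rewrite !(condED, condEZ, condE_cst); try by bounded_rv.
by rewrite /condVar /condCov; ring.
Qed.

Lemma condE_sqrB U V : bounded_rv U -> bounded_rv V ->
  E (fun w => (U w - V w) ^+ 2)
  = Var U - 2 * Cov U V + Var V + (E U - E V) ^+ 2.
Proof.
move=> bU bV; have := condE_sqr_affine_residual 0 1 bU bV.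
rewrite subr0 !mul1r expr1n mul1r mulr1.
by under eq_fun do rewrite subr0 mul1r.
Qed.

Lemma condVar_ge0 U : bounded_rv U -> 0 <= Var U.
Proof.
move=> bU; have <- : E (fun w => (U w - E U - 0 * U w) ^+ 2) = Var U.
  by rewrite condE_sqr_affine_residual //; ring.
by apply: condE_ge0 => w; exact: sqr_ge0.
Qed.

Lemma condVar_le_quarter V :
  measurable_fun setT V -> (forall w, 0 <= V w <= 1) -> Var V <= 4^-1.
Proof.
move=> mV V01; have bV := bounded_rv01 mV V01.
have VV_le_V : E (fun w => V w * V w) <= E V.
  apply: ler_condE => //; first by bounded_rv.
  by move=> w; have /andP[V0 V1] := V01 w; rewrite ler_piMr.
have := sqr_ge0 (E V - 2^-1); rewrite /condVar /condCov; nra.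
Qed.

Lemma condVar_le_sqr_error U V : bounded_rv U -> bounded_rv V ->
  Var U <= E (fun w => (U w - V w) ^+ 2) + 2 * `|Cov V U|.
Proof.
move=> bU bV; rewrite condE_sqrB // condCovC.
have := condVar_ge0 bV; have := sqr_ge0 (E U - E V); have := ler_norm (Cov V U).
lra.
Qed.

(* The witness beta = 4 Cov(U, V) is the optimal slope Cov / Var for the
   worst case Var V = 1/4; it avoids dividing by a possibly vanishing Var V. *)
Lemma sqr_error_add_cov_le_var U V eta : bounded_rv U ->
  measurable_fun setT V -> (forall w, 0 <= V w <= 1) ->
  (forall beta gamma, E (fun w => (U w - V w) ^+ 2)
     <= E (fun w => (U w - gamma - beta * V w) ^+ 2) + eta) ->
  E (fun w => (U w - V w) ^+ 2) + 4 * Cov U V ^+ 2 <= Var U + eta.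
Proof.
move=> bU mV V01 near_opt; have bV := bounded_rv01 mV V01.
set C := Cov U V.
have := near_opt (4 * C) (E U - 4 * C * E V).
rewrite condE_sqr_affine_residual // -/C.
have -> : Var U - 2 * (4 * C) * C + (4 * C) ^+ 2 * Var V
    + (E U - (E U - 4 * C * E V) - 4 * C * E V) ^+ 2
    = Var U - 4 * C ^+ 2 - 16 * (C ^+ 2 * (4^-1 - Var V)) by field.
have : 0 <= C ^+ 2 * (4^-1 - Var V).
  by rewrite mulr_ge0 ?sqr_ge0 ?subr_ge0 ?condVar_le_quarter.
lra.
Qed.

End conditional_moments.

Theorem corollary1 (R : realType)
  (d : measure_display) (T : measurableType d) (P : probability T R)
  (dX : measure_display) (Xs : measurableType dX)
  (dH : measure_display) (Hs : measurableType dH)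
  (X : T -> Xs) (Y : T -> R) (H : T -> Hs)
  (mX : measurable_fun setT X) (mY : measurable_fun setT Y)
  (mH : measurable_fun setT H)
  (Y01 : forall w, 0 <= Y w <= 1)
  (F : set (Xs -> R))
  (mF : forall f, F f -> measurable_fun setT f)
  (F01 : forall f, F f -> forall x, 0 <= f x <= 1)
  (alpha : R) (halpha : 0 <= alpha)
  (S : set Xs) (mS : measurable S) (PS : (0 < P (X @^-1` S))%E)
  (hind : indistinguishable P X Y F S alpha)
  (g : Hs -> R) (mg : measurable_fun setT g) (g01 : forall h, 0 <= g h <= 1)
  (eta : R) (heta : 0 <= eta)
  (hg : forall beta gamma : R,
     condE P (X @^-1` S) (fun w => (Y w - g (H w)) ^+ 2)
     <= condE P (X @^-1` S) (fun w => (Y w - gamma - beta * g (H w)) ^+ 2) + eta) :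
  forall f, F f ->
    condE P (X @^-1` S) (fun w => (Y w - g (H w)) ^+ 2)
    + 4 * (condCov P (X @^-1` S) Y (fun w => g (H w))) ^+ 2
    <= condE P (X @^-1` S) (fun w => (Y w - f (X w)) ^+ 2) + 2 * alpha + eta.
Proof.
move=> f Ff.
have mXS : measurable (X @^-1` S) by rewrite -[X @^-1` S]setTI; exact: mX.
have bY := bounded_rv01 mY Y01.
have bfX : bounded_rv (fun w => f (X w)).
  by apply: bounded_rv01 => [|w]; [exact: measurableT_comp (mF f Ff) mX | exact: F01].
have mgH : measurable_fun setT (fun w => g (H w)) by exact: measurableT_comp.
have var_le := condVar_le_sqr_error mXS PS bY bfX.
have err_le := sqr_error_add_cov_le_var mXS PS bY mgH (fun w => g01 (H w)) hg.
have := hind f Ff.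
lra.
Qed.
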